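(* Let $G$ be a countable group, and identify $\mathbf{P}_G$ with $\{0,1\}^G$ with the product topology. Then the family of all sparse subsets of $G$ is a coanalytic subset of $\mathbf{P}_G$, and the family of all $P$-small subsets of $G$ is an analytic subset of $\mathbf{P}_G$.
   Context: $\mathbf{P}_G$ is the power set of $G$, identified with $\{0,1\}^G$ via characteristic functions (a Polish space when $G$ is countable). A subset $A\subseteq G$ is sparse if for every infinite subset $X\subseteq G$ there is a finite subset $F\subseteq X$ such that $\bigcap_{g\in F}gA$ is finite. $A$ is $P$-small if there is an injective sequence $(g_n)_{n\in\omega}$ in $G$ such that the sets $g_nA$, $n\in\omega$, are pairwise disjoint. A subset of a Polish space is analytic if it is a continuous image of a Polish space, and coanalytic if its complement is analytic. *)

From Stdlib Require Import Reals List.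
Open Scope R_scope.

Record group := Group {
  gcar :> Type;
  gmul : gcar -> gcar -> gcar;
  gone : gcar;
  ginv : gcar -> gcar;
  gmulA : forall x y z, gmul x (gmul y z) = gmul (gmul x y) z;
  gmul1l : forall x, gmul gone x = x;
  gmulVl : forall x, gmul (ginv x) x = gone
}.

Definition countable_type (T : Type) : Prop :=
  exists e : T -> nat, forall x y, e x = e y -> x = y.

Definition finite_set {T : Type} (X : T -> Prop) : Prop :=
  exists l : list T, forall x, X x -> In x l.
Definition infinite_set {T : Type} (X : T -> Prop) : Prop := ~ finite_set X.

(* Points of P_G = {0,1}^G are characteristic functions A : G -> bool. *)
Definition translate (G : group) (g : G) (A : G -> bool) : G -> Prop :=
  fun x => exists a, A a = true /\ x = gmul G g a.

(* A is sparse: for every infinite X ⊆ G there is a finite F ⊆ X with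
   ⋂_{g in F} gA finite (empty intersection = G). *)
Definition sparse (G : group) (A : G -> bool) : Prop :=
  forall X : G -> Prop, infinite_set X ->
    exists F : list G, (forall g, In g F -> X g) /\
      finite_set (fun x => forall g, In g F -> translate G g A x).

Definition P_small (G : group) (A : G -> bool) : Prop :=
  exists gs : nat -> G, (forall n m, gs n = gs m -> n = m) /\
    forall n m, n <> m -> forall x,
      ~ (translate G (gs n) A x /\ translate G (gs m) A x).

Definition is_metric {X : Type} (d : X -> X -> R) : Prop :=
  (forall x y, 0 <= d x y) /\ (forall x y, d x y = 0 <-> x = y) /\
  (forall x y, d x y = d y x) /\ (forall x y z, d x z <= d x y + d y z).

Definition metric_cauchy {X : Type} (d : X -> X -> R) (u : nat -> X) : Prop :=
  forall eps, 0 < eps -> exists N, forall n m, (N <= n)%nat -> (N <= m)%nat ->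
    d (u n) (u m) < eps.

Definition metric_converges {X : Type} (d : X -> X -> R) (u : nat -> X) (l : X) : Prop :=
  forall eps, 0 < eps -> exists N, forall n, (N <= n)%nat -> d (u n) l < eps.

Definition metric_complete {X : Type} (d : X -> X -> R) : Prop :=
  forall u, metric_cauchy d u -> exists l, metric_converges d u l.

(* separable: a countable dense subset (enumerated by nat, possibly with gaps,
   so that the empty space is allowed) *)
Definition metric_separable {X : Type} (d : X -> X -> R) : Prop :=
  exists D : nat -> option X, forall x eps, 0 < eps ->
    exists n y, D n = Some y /\ d x y < eps.

Definition polish {X : Type} (d : X -> X -> R) : Prop :=
  is_metric d /\ metric_complete d /\ metric_separable d.

(* Continuity into {0,1}^G with the product topology (of discrete {0,1}):
   each coordinate map is continuous, i.e. locally constant. *)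
Definition continuous_into_PG {X : Type} (d : X -> X -> R) (G : Type)
  (f : X -> (G -> bool)) : Prop :=
  forall (g : G) (x : X), exists eps, 0 < eps /\
    forall y, d x y < eps -> f y g = f x g.

Definition analytic_PG (G : Type) (S : (G -> bool) -> Prop) : Prop :=
  exists (X : Type) (d : X -> X -> R), polish d /\
    exists f : X -> (G -> bool), continuous_into_PG d G f /\
      forall A : G -> bool, S A <-> exists x, forall g, f x g = A g.

Definition coanalytic_PG (G : Type) (S : (G -> bool) -> Prop) : Prop :=
  analytic_PG G (fun A => ~ S A).

From Stdlib Require Import Reals List Lra Lia Arith FinFun.
From Stdlib Require Import Classical ClassicalEpsilon FunctionalExtensionality ProofIrrelevance.
From Stdlib Require Cantor.
Open Scope R_scope.

(* Both families are projections of closed subsets of a product (bool * G)^I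
   of countable discrete spaces over a countable index set I.  A is P-small iff
   there is an injective sequence (g_n) with A(g_n^-1 x) and A(g_m^-1 x) never
   both true for n <> m; A is not sparse iff there are an injective sequence
   (x_n) and, for every k, an injective sequence (w_{k,m})_m inside
   x_0 A ∩ ... ∩ x_{k-1} A (take X = {x_n}; every finite F ⊆ X lies in some
   {x_j | j < k}).  Each condition involves finitely many coordinates at a
   time, so the witnesses form a closed set; with the first-difference
   ultrametric it is Polish, and reading off the A-coordinates is continuous. *)

Lemma inv2pow_pos k : 0 < / 2 ^ k.
Proof. apply Rinv_0_lt_compat, pow_lt; lra. Qed.

Lemma inv2pow_le a b : (a <= b)%nat -> / 2 ^ b <= / 2 ^ a.
Proof.
  intros H. apply Rinv_le_contravar; [apply pow_lt; lra|]. apply Rle_pow; [lra|exact H].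
Qed.

Lemma inv2pow_le_inv a b : / 2 ^ b <= / 2 ^ a -> (a <= b)%nat.
Proof.
  intros H. destruct (le_lt_dec a b) as [|Hba]; auto.
  assert (/ 2 ^ a < / 2 ^ b); [|lra].
  apply Rinv_lt_contravar; [apply Rmult_lt_0_compat; apply pow_lt; lra|].
  apply Rlt_pow; [lra|exact Hba].
Qed.

Lemma inv2pow_lt_eps eps : 0 < eps -> exists k, / 2 ^ k < eps.
Proof.
  intros He. destruct (pow_lt_1_zero (/2) ltac:(rewrite Rabs_right; lra) eps He) as [N HN].
  exists N. specialize (HN N (le_n N)). rewrite pow_inv, Rabs_right in HN; auto.
  apply Rle_ge, Rlt_le, inv2pow_pos.
Qed.

Section FirstDifferenceMetric.

Context {I T : Type} (eI : I -> nat).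

Definition agree (x y : I -> T) (k : nat) : Prop :=
  forall i, (eI i < k)%nat -> x i = y i.

Lemma agree_mono x y k k' : (k <= k')%nat -> agree x y k' -> agree x y k.
Proof. intros Hk H i Hi. apply H. lia. Qed.

Lemma agree_sym x y k : agree x y k -> agree y x k.
Proof. intros H i Hi. symmetry. apply H; auto. Qed.

Lemma agree_last_level x y :
  ~ (forall k, agree x y k) -> exists k, agree x y k /\ ~ agree x y (S k).
Proof.
  intros H. apply not_all_ex_not in H. destruct H as [k Hk].
  induction k as [|k IH].
  - exfalso; apply Hk; intros i Hi; lia.
  - destruct (classic (agree x y k)); [exists k; auto|apply IH; assumption].
Qed.

Definition dist (x y : I -> T) : R :=
  match excluded_middle_informative (forall k, agree x y k) with
  | left _ => 0
  | right H => / 2 ^ proj1_sig (constructive_indefinite_description _ (agree_last_level x y H))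
  end.

Lemma dist_spec x y :
  (dist x y = 0 /\ forall k, agree x y k) \/
  exists j, dist x y = / 2 ^ j /\ agree x y j /\ ~ agree x y (S j).
Proof.
  unfold dist. destruct excluded_middle_informative as [H|H]; [left; auto|right].
  destruct constructive_indefinite_description as [j Hj]; simpl. exists j; tauto.
Qed.

Lemma dist_le_iff x y k : dist x y <= / 2 ^ k <-> agree x y k.
Proof.
  destruct (dist_spec x y) as [[-> Ha]|[j [-> [Ha Hn]]]].
  - split; intros; [apply Ha|apply Rlt_le, inv2pow_pos].
  - split; intro H.
    + apply (agree_mono _ _ k j); [apply inv2pow_le_inv; exact H|exact Ha].
    + apply inv2pow_le. destruct (le_lt_dec k j); auto. exfalso; apply Hn.
      apply (agree_mono _ _ (S j) k); [lia|exact H].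
Qed.

Lemma dist_lt_agree x y k : dist x y < / 2 ^ k -> agree x y (S k).
Proof.
  intros H. apply dist_le_iff. destruct (dist_spec x y) as [[-> _]|[j [Hj [_ Hn]]]].
  - apply Rlt_le, inv2pow_pos.
  - rewrite Hj in *. apply inv2pow_le. destruct (le_lt_dec (S k) j) as [|Hjk]; auto.
    pose proof (inv2pow_le j k ltac:(lia)). lra.
Qed.

Lemma dist_eq0 x y : dist x y = 0 -> x = y.
Proof.
  destruct (dist_spec x y) as [[_ Ha]|[j [-> _]]]; intros H.
  - apply functional_extensionality; intro i. apply (Ha (S (eI i))); lia.
  - pose proof (inv2pow_pos j). lra.
Qed.

Lemma dist_xx x : dist x x = 0.
Proof.
  destruct (dist_spec x x) as [[H _]|[j [_ [_ Hn]]]]; auto.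
  exfalso; apply Hn; intros i _; reflexivity.
Qed.

Lemma dist_sym x y : dist x y = dist y x.
Proof.
  destruct (dist_spec y x) as [[-> Ha]|[j [-> [Ha Hn]]]].
  - destruct (dist_spec x y) as [[-> _]|[j [_ [_ Hn]]]]; auto.
    exfalso; apply Hn, agree_sym, Ha.
  - apply Rle_antisym.
    + apply dist_le_iff, agree_sym, Ha.
    + apply Rnot_lt_le; intros Hlt. apply Hn, agree_sym, dist_lt_agree, Hlt.
Qed.

Lemma dist_triangle x y z : dist x z <= dist x y + dist y z.
Proof.
  destruct (dist_spec x y) as [[H0 _]|[j [Hj [Ha _]]]].
  { apply dist_eq0 in H0; subst. rewrite dist_xx; lra. }
  destruct (dist_spec y z) as [[H0 _]|[j' [Hj' [Ha' _]]]].
  { apply dist_eq0 in H0; subst. rewrite dist_xx; lra. }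
  pose proof (inv2pow_pos j). pose proof (inv2pow_pos j').
  assert (dist x z <= / 2 ^ Nat.min j j'). 2: {
    destruct (Nat.min_spec j j') as [[_ E]|[_ E]]; rewrite E in *; lra. }
  apply dist_le_iff. intros i Hi. rewrite (Ha i ltac:(lia)). apply Ha'. lia.
Qed.

End FirstDifferenceMetric.

Lemma cantor_to_nat_inj : Injective Cantor.to_nat.
Proof.
  intros p q H. rewrite <- (Cantor.cancel_of_to p), <- (Cantor.cancel_of_to q). f_equal; exact H.
Qed.

Fixpoint list_code (l : list nat) : nat :=
  match l with nil => 0%nat | a :: l => S (Cantor.to_nat (a, list_code l)) end.

Lemma list_code_inj : Injective list_code.
Proof.
  intros l1; induction l1 as [|a l1 IH]; intros [|b l2] H; try discriminate; auto.
  apply eq_add_S, cantor_to_nat_inj in H. injection H as -> E.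
  f_equal. apply IH, E.
Qed.

Section ClosedSubspace.

Context {I T : Type} (eI : I -> nat).

Definition product_closed (P : (I -> T) -> Prop) : Prop :=
  forall z, (forall k, exists y, P y /\ agree eI z y k) -> P z.

Lemma agree_limit (u : nat -> I -> T) :
  (forall k, exists N, forall n m, (N <= n)%nat -> (N <= m)%nat -> agree eI (u n) (u m) k) ->
  exists l, forall k, exists N, forall n, (N <= n)%nat -> agree eI (u n) l k.
Proof.
  intros HN.
  destruct (choice _ HN) as [N HNs].
  exists (fun i => u (N (S (eI i))) i). intros k. exists (N k). intros n Hn i Hi.
  set (n' := Nat.max n (N (S (eI i)))).
  transitivity (u n' i).
  - apply (HNs k); lia.
  - apply (HNs (S (eI i))); lia.
Qed.

Lemma agree_on_list (P : (I -> T) -> Prop) z :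
  (forall k, exists y, P y /\ agree eI z y k) ->
  forall L : list I, exists y, P y /\ forall i, In i L -> z i = y i.
Proof.
  intros H L. destruct (H (S (list_max (map eI L)))) as [y [Py Hy]].
  exists y; split; auto. intros i Hi. apply Hy.
  assert (eI i <= list_max (map eI L))%nat; [|lia].
  assert (Hall := proj1 (list_max_le (map eI L) _) (le_n _)).
  rewrite Forall_forall in Hall. apply Hall, in_map, Hi.
Qed.

Variable P : (I -> T) -> Prop.

Definition sdist (x y : sig P) : R := dist eI (proj1_sig x) (proj1_sig y).

Lemma sdist_metric : is_metric sdist.
Proof.
  unfold sdist. split; [|split; [|split]].
  - intros x y. destruct (dist_spec eI (proj1_sig x) (proj1_sig y)) as [[-> _]|[j [-> _]]];
      [lra|apply Rlt_le, inv2pow_pos].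
  - intros [x Px] [y Py]; simpl. split; intro H.
    + apply dist_eq0 in H. subst. f_equal. apply proof_irrelevance.
    + injection H as ->. apply dist_xx.
  - intros; apply dist_sym.
  - intros; apply dist_triangle.
Qed.

Lemma sdist_complete : product_closed P -> metric_complete sdist.
Proof.
  intros HP u Hu.
  destruct (agree_limit (fun n => proj1_sig (u n))) as [l Hl].
  { intro k. destruct (Hu (/2^k) (inv2pow_pos k)) as [N HN]. exists N.
    intros n m Hn Hm. apply agree_mono with (S k); [lia|]. apply dist_lt_agree, HN; auto. }
  assert (Pl : P l).
  { apply HP. intros k. destruct (Hl k) as [N HN].
    exists (proj1_sig (u N)). split; [exact (proj2_sig (u N))|]. apply agree_sym, HN; lia. }
  exists (exist _ l Pl). intros eps Heps.
  destruct (inv2pow_lt_eps eps Heps) as [k Hk]. destruct (Hl k) as [N HN].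
  exists N. intros n Hn. apply Rle_lt_trans with (/2^k); [|exact Hk].
  apply dist_le_iff, HN, Hn.
Qed.

Definition code_prefix (eT : T -> nat) (l : list nat) (x : I -> T) : Prop :=
  forall i, (eI i < length l)%nat -> nth (eI i) l 0%nat = eT (x i).

(* Coordinates outside the range of [eI] are padded with [0]. *)
Lemma code_prefix_exists (eT : T -> nat) :
  Injective eI -> forall (x : I -> T) k, exists l, length l = k /\ code_prefix eT l x.
Proof.
  intros HI x k. induction k as [|k [l [Hl He]]].
  - exists nil; split; auto. intros i Hi; simpl in Hi; lia.
  - assert (Hnew : exists c, forall i, eI i = k -> c = eT (x i)).
    { destruct (classic (exists i, eI i = k)) as [[i0 Hi0]|Hn].
      - exists (eT (x i0)). intros i Hi. rewrite (HI i i0) by lia. reflexivity.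
      - exists 0%nat. intros i Hi. exfalso; eauto. }
    destruct Hnew as [c Hc].
    exists (l ++ c :: nil). split; [rewrite length_app; simpl; lia|].
    intros i Hi. rewrite length_app in Hi; simpl in Hi.
    destruct (Nat.eq_dec (eI i) k) as [E|E].
    + rewrite app_nth2, E, Hl, Nat.sub_diag by lia. apply Hc, E.
    + rewrite app_nth1 by lia. apply He. lia.
Qed.

Lemma sdist_separable (eT : T -> nat) :
  Injective eI -> Injective eT -> metric_separable sdist.
Proof.
  intros HI HT.
  exists (fun n => match excluded_middle_informative
                 (exists y : sig P, exists l, list_code l = n /\ code_prefix eT l (proj1_sig y)) with
               | left H => Some (proj1_sig (constructive_indefinite_description _ H))
               | right _ => None end).
  intros x eps Heps. destruct (inv2pow_lt_eps eps Heps) as [k Hk].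
  destruct (code_prefix_exists eT HI (proj1_sig x) k) as [l [Hl Hx]].
  exists (list_code l). destruct excluded_middle_informative as [H|H].
  - destruct constructive_indefinite_description as [y [l' [Hc Hy]]]; simpl.
    apply list_code_inj in Hc; subst l'.
    exists y; split; auto. apply Rle_lt_trans with (/2^k); [|exact Hk].
    apply dist_le_iff. intros i Hi. apply HT. rewrite <- Hx, <- Hy; auto; lia.
  - exfalso; apply H. exists x, l; auto.
Qed.

Lemma sdist_polish (eT : T -> nat) :
  Injective eI -> Injective eT -> product_closed P -> polish sdist.
Proof.
  intros HI HT HP. split; [apply sdist_metric|].
  split; [apply sdist_complete, HP|apply sdist_separable with eT; assumption].
Qed.

Lemma continuous_coord {G : Type} (coord : G -> I) (bit : T -> bool) :
  continuous_into_PG sdist G (fun x g => bit (proj1_sig x (coord g))).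
Proof.
  intros g x. exists (/2^(eI (coord g))). split; [apply inv2pow_pos|].
  intros y Hy. apply dist_lt_agree in Hy. rewrite <- (Hy (coord g)); [reflexivity|lia].
Qed.

End ClosedSubspace.

Lemma analytic_closed_projection {I T G : Type} (eI : I -> nat) (eT : T -> nat)
    (P : (I -> T) -> Prop) (coord : G -> I) (bit : T -> bool) (S : (G -> bool) -> Prop) :
  Injective eI -> Injective eT -> product_closed eI P ->
  (forall A, S A <-> exists z, P z /\ forall g, bit (z (coord g)) = A g) ->
  analytic_PG G S.
Proof.
  intros HI HT HP HS. exists (sig P), (sdist eI P).
  split; [apply sdist_polish with eT; assumption|].
  exists (fun x g => bit (proj1_sig x (coord g))).
  split; [apply continuous_coord|].
  intros A. rewrite HS. split.
  - intros [z [Pz Hz]]. exists (exist _ z Pz). exact Hz.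
  - intros [[z Pz] Hz]. exists z. split; assumption.
Qed.

Lemma gmulV (G : group) (x : G) : gmul G x (ginv G x) = gone G.
Proof.
  set (y := gmul G x (ginv G x)).
  assert (yy : gmul G y y = y).
  { unfold y. rewrite <- gmulA, (gmulA G (ginv G x) x), gmulVl, gmul1l. reflexivity. }
  assert (H : gmul G (ginv G y) (gmul G y y) = y) by (rewrite gmulA, gmulVl, gmul1l; reflexivity).
  rewrite yy, gmulVl in H. symmetry; exact H.
Qed.

Lemma translate_iff (G : group) g (A : G -> bool) x :
  translate G g A x <-> A (gmul G (ginv G g) x) = true.
Proof.
  split.
  - intros [a [Ha ->]]. rewrite gmulA, gmulVl, gmul1l. exact Ha.
  - intros H. exists (gmul G (ginv G g) x). split; auto.
    rewrite gmulA, gmulV, gmul1l. reflexivity.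
Qed.

Fixpoint greedy_list {T} (c : list T -> T) (n : nat) : list T :=
  match n with 0%nat => nil | S n => greedy_list c n ++ c (greedy_list c n) :: nil end.

Lemma infinite_injective_seq {T} (X : T -> Prop) :
  infinite_set X -> exists s : nat -> T, Injective s /\ forall n, X (s n).
Proof.
  intros H.
  assert (Hc : forall l : list T, exists x, X x /\ ~ In x l).
  { intro l. apply NNPP; intro Hn. apply H. exists l. intros x Hx. apply NNPP; intro Hi.
    apply Hn; exists x; auto. }
  destruct (choice _ Hc) as [c Hcs].
  assert (Hin : forall n m, (m < n)%nat -> In (c (greedy_list c m)) (greedy_list c n)).
  { induction n; intros m Hm; [lia|]. simpl. apply in_or_app.
    destruct (Nat.eq_dec m n); [subst; right; left; reflexivity|left; apply IHn; lia]. }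
  exists (fun n => c (greedy_list c n)). split; [|intro n; apply Hcs].
  intros n m Heq. destruct (Nat.lt_trichotomy n m) as [Hl|[He|Hl]]; auto; exfalso.
  - apply (proj2 (Hcs (greedy_list c m))). rewrite <- Heq. apply Hin; auto.
  - apply (proj2 (Hcs (greedy_list c n))). rewrite Heq. apply Hin; auto.
Qed.

Lemma injective_seq_infinite {T} (s : nat -> T) (X : T -> Prop) :
  Injective s -> (forall n, X (s n)) -> infinite_set X.
Proof.
  intros Hi Hx [l Hl].
  assert (H1 : NoDup (map s (seq 0 (S (length l))))).
  { apply NoDup_map_NoDup_ForallPairs; [intros a b _ _; apply Hi|apply seq_NoDup]. }
  assert (H2 : incl (map s (seq 0 (S (length l)))) l).
  { intros y Hy. apply in_map_iff in Hy. destruct Hy as [n [<- _]]. apply Hl, Hx. }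
  pose proof (NoDup_incl_length H1 H2). rewrite length_map, length_seq in H. lia.
Qed.

Lemma list_in_initial_segment {T} (s : nat -> T) (F : list T) :
  (forall g, In g F -> exists j, g = s j) ->
  exists k, forall g, In g F -> exists j, (j < k)%nat /\ g = s j.
Proof.
  induction F as [|a F IH]; intros H.
  - exists 0%nat; intros g [].
  - destruct IH as [k Hk]; [intros; apply H; right; auto|].
    destruct (H a (or_introl eq_refl)) as [j Hj].
    exists (Nat.max k (S j)). intros g [<-|Hg].
    + exists j; split; [lia|auto].
    + destruct (Hk g Hg) as [j' [? ?]]; exists j'; split; [lia|auto].
Qed.

Definition sum_code {A B} (eA : A -> nat) (eB : B -> nat) (x : A + B) : nat :=
  match x with inl a => 2 * eA a | inr b => S (2 * eB b) end.

Lemma sum_code_inj {A B} (eA : A -> nat) (eB : B -> nat) :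
  Injective eA -> Injective eB -> Injective (sum_code eA eB).
Proof.
  intros HA HB [a|b] [a'|b']; simpl; intros H; try lia; f_equal; [apply HA|apply HB]; lia.
Qed.

Definition pair_code {A B} (eA : A -> nat) (eB : B -> nat) (p : A * B) : nat :=
  Cantor.to_nat (eA (fst p), eB (snd p)).

Lemma pair_code_inj {A B} (eA : A -> nat) (eB : B -> nat) :
  Injective eA -> Injective eB -> Injective (pair_code eA eB).
Proof.
  intros HA HB [a b] [a' b'] H. apply (cantor_to_nat_inj (eA a, eB b) (eA a', eB b')) in H. injection H as Ha Hb.
  f_equal; [apply HA|apply HB]; assumption.
Qed.

Lemma b2n_inj : Injective Nat.b2n.
Proof. intros [|] [|]; simpl; congruence. Qed.

Lemma nat_id_inj : Injective (fun n : nat => n).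
Proof. intros n m; auto. Qed.

Section Witnesses.

Variable G : group.

(* A point z stores A g in the bool of coordinate [inl g] and the witness
   sequences in the G-components of the [inr] coordinates; the other
   components are ignored. *)
Definition set_part {J} (z : G + J -> bool * G) (g : G) : bool := fst (z (inl g)).

Definition small_seq (z : G + nat -> bool * G) (n : nat) : G := snd (z (inr n)).

Definition small_witness (z : G + nat -> bool * G) : Prop :=
  Injective (small_seq z) /\
  forall n m x, n <> m ->
    ~ (set_part z (gmul G (ginv G (small_seq z n)) x) = true /\
       set_part z (gmul G (ginv G (small_seq z m)) x) = true).

Lemma small_witness_closed (eI : G + nat -> nat) : product_closed eI small_witness.
Proof.
  intros z Hz. pose proof (agree_on_list eI _ z Hz) as Happrox. split.
  - intros n m H. destruct (Happrox (inr n :: inr m :: nil)) as [y [Py Hy]].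
    unfold small_seq in H. rewrite (Hy (inr n)), (Hy (inr m)) in H by (simpl; tauto).
    apply (proj1 Py), H.
  - intros n m x Hnm.
    set (a := gmul G (ginv G (small_seq z n)) x). set (b := gmul G (ginv G (small_seq z m)) x).
    destruct (Happrox (inr n :: inr m :: inl a :: inl b :: nil)) as [y [Py Hy]].
    unfold set_part. rewrite (Hy (inl a)), (Hy (inl b)) by (simpl; tauto).
    unfold a, b, small_seq. rewrite (Hy (inr n)), (Hy (inr m)) by (simpl; tauto).
    apply (proj2 Py n m x Hnm).
Qed.

Lemma P_small_iff_witness A :
  P_small G A <-> exists z, small_witness z /\ forall g, set_part z g = A g.
Proof.
  split.
  - intros [gs [Hinj Hdis]].
    exists (fun i => match i with inl g => (A g, gone G) | inr n => (false, gs n) end).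
    split; [split|reflexivity].
    + exact Hinj.
    + intros n m x Hnm [H1 H2]. apply (Hdis n m Hnm x).
      split; apply translate_iff; assumption.
  - intros [z [[Hinj Hdis] Hz]]. exists (small_seq z). split; [exact Hinj|].
    intros n m Hnm x. rewrite !translate_iff, <- !Hz. apply Hdis, Hnm.
Qed.

Definition x_seq (z : G + (nat + nat * nat) -> bool * G) (n : nat) : G :=
  snd (z (inr (inl n))).
Definition w_seq (z : G + (nat + nat * nat) -> bool * G) (k m : nat) : G :=
  snd (z (inr (inr (k, m)))).

Definition nonsparse_witness (z : G + (nat + nat * nat) -> bool * G) : Prop :=
  Injective (x_seq z) /\ (forall k, Injective (w_seq z k)) /\
  forall k m j, (j < k)%nat -> set_part z (gmul G (ginv G (x_seq z j)) (w_seq z k m)) = true.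

Lemma nonsparse_witness_closed (eI : G + (nat + nat * nat) -> nat) :
  product_closed eI nonsparse_witness.
Proof.
  intros z Hz. pose proof (agree_on_list eI _ z Hz) as Happrox. split; [|split].
  - intros n m H. destruct (Happrox (inr (inl n) :: inr (inl m) :: nil)) as [y [Py Hy]].
    unfold x_seq in H. rewrite !Hy in H by (simpl; tauto).
    apply (proj1 Py), H.
  - intros k m m' H.
    destruct (Happrox (inr (inr (k, m)) :: inr (inr (k, m')) :: nil)) as [y [Py Hy]].
    unfold w_seq in H. rewrite !Hy in H by (simpl; tauto).
    apply (proj1 (proj2 Py) k), H.
  - intros k m j Hj.
    set (a := gmul G (ginv G (x_seq z j)) (w_seq z k m)).
    destruct (Happrox (inr (inl j) :: inr (inr (k, m)) :: inl a :: nil)) as [y [Py Hy]].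
    unfold set_part. rewrite (Hy (inl a)) by (simpl; tauto).
    unfold a, x_seq, w_seq. rewrite (Hy (inr (inl j))), (Hy (inr (inr (k, m)))) by (simpl; tauto).
    apply (proj2 (proj2 Py)), Hj.
Qed.

Lemma not_sparse_witness A :
  ~ sparse G A -> exists z, nonsparse_witness z /\ forall g, set_part z g = A g.
Proof.
  intros Hns. apply not_all_ex_not in Hns. destruct Hns as [X HX].
  apply imply_to_and in HX. destruct HX as [Hinf HnF].
  destruct (infinite_injective_seq X Hinf) as [s [Hs HsX]].
  assert (HW : forall k, exists w : nat -> G, Injective w /\
            forall m g, In g (map s (seq 0 k)) -> translate G g A (w m)).
  { intro k.
    destruct (infinite_injective_seq
                (fun x => forall g, In g (map s (seq 0 k)) -> translate G g A x))
      as [w Hw]; [|exists w; exact Hw].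
    intros Hfin. apply HnF. exists (map s (seq 0 k)). split; [|exact Hfin].
    intros g Hg. apply in_map_iff in Hg. destruct Hg as [n [<- _]]. apply HsX. }
  destruct (choice _ HW) as [W HWs].
  exists (fun i => match i with
            | inl g => (A g, gone G)
            | inr (inl n) => (false, s n)
            | inr (inr (k, m)) => (false, W k m) end).
  split; [split; [|split]|reflexivity].
  - exact Hs.
  - intro k. apply (proj1 (HWs k)).
  - intros k m j Hj. apply translate_iff, (proj2 (HWs k)), in_map, in_seq. lia.
Qed.

Lemma witness_not_sparse z : nonsparse_witness z -> ~ sparse G (set_part z).
Proof.
  intros [Hx [Hw Hint]] Hsp.
  destruct (Hsp (fun g => exists n, g = x_seq z n)) as [F [HF Hfin]].
  { apply (injective_seq_infinite (x_seq z)); [exact Hx|intro n; exists n; reflexivity]. }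
  destruct (list_in_initial_segment (x_seq z) F HF) as [k Hk].
  apply (injective_seq_infinite (w_seq z k) _ (Hw k)) in Hfin; auto.
  intros m g Hg. destruct (Hk g Hg) as [j [Hj ->]]. apply translate_iff, Hint, Hj.
Qed.

Lemma not_sparse_iff_witness A :
  ~ sparse G A <-> exists z, nonsparse_witness z /\ forall g, set_part z g = A g.
Proof.
  split; [apply not_sparse_witness|].
  intros [z [Hz HzA]]. replace A with (set_part z) by (apply functional_extensionality, HzA).
  apply witness_not_sparse, Hz.
Qed.

End Witnesses.

Theorem theorem3p3 (G : group) (hG : countable_type G) :
  coanalytic_PG G (sparse G) /\ analytic_PG G (P_small G).
Proof.
  destruct hG as [eG HG].
  assert (Hcode : Injective (pair_code Nat.b2n eG)).
  { apply pair_code_inj; [apply b2n_inj|exact HG]. }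
  split.
  - apply (analytic_closed_projection
             (sum_code eG (sum_code (fun n => n) (pair_code (fun n => n) (fun n => n))))
             (pair_code Nat.b2n eG) (nonsparse_witness G) inl fst).
    + apply sum_code_inj; [exact HG|].
      apply sum_code_inj; [apply nat_id_inj|apply pair_code_inj; apply nat_id_inj].
    + exact Hcode.
    + apply nonsparse_witness_closed.
    + apply not_sparse_iff_witness.
  - apply (analytic_closed_projection (sum_code eG (fun n => n)) (pair_code Nat.b2n eG)
             (small_witness G) inl fst).
    + apply sum_code_inj; [exact HG|apply nat_id_inj].
    + exact Hcode.
    + apply small_witness_closed.
    + apply P_small_iff_witness.
Qed.
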